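(* Let $R_1,R_2$ be commutative rings with identity, $M_i$ an $R_i$-module, $S_i=R_i\setminus Z_{R_i}(M_i)$ for $i=1,2$, $R=R_1\times R_2$ and $M=M_1\times M_2$. Then $M$ satisfies proper strong Property $\mathcal{A}$ as an $R$-module if and only if for each $i=1,2$, $M_i$ satisfies proper strong Property $\mathcal{A}$ as an $R_i$-module and $S_i^{-1}R_i=R_i$.
   Context: For an $R$-module $M$, $Z_R(M)=\{r\in R: rm=0 \text{ for some } 0\neq m\in M\}$. $M$ satisfies proper strong Property $\mathcal{A}$ if for every proper finitely generated ideal $I=\langle a_1,\dots,a_n\rangle$ of $R$ with $a_i\in Z_R(M)$ for all $i$, we have $(0:_M I)\neq 0$. For a multiplicatively closed set $S$, ''$S^{-1}R=R$'' means that the canonical map $R\to S^{-1}R$ is an isomorphism (equivalently every element of $S$ is a unit of $R$). $M_1\times M_2$ is an $R_1\times R_2$-module via componentwise operations. *)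

From HB Require Import structures.
From mathcomp Require Import all_boot all_order all_algebra.
Set Implicit Arguments. Unset Strict Implicit. Unset Printing Implicit Defensive.
Import GRing.Theory.
Local Open Scope ring_scope.

Definition zdiv {R : comPzRingType} (M : lmodType R) (r : R) : Prop :=
  exists m : M, m != 0 /\ r *: m = 0.

Definition in_ideal (R : comPzRingType) (a : seq R) (r : R) : Prop :=
  exists c : seq R, size c = size a /\ r = \sum_(i < size a) c`_i * a`_i.

Definition in_colon {R : comPzRingType} (M : lmodType R) (a : seq R) (m : M)
  : Prop := forall r, in_ideal a r -> r *: m = 0.

Definition proper_strong_A {R : comPzRingType} (M : lmodType R) : Prop :=
  forall a : seq R, (0 < size a)%N ->
    (forall x, x \in a -> zdiv M x) ->
    ~ in_ideal a 1 ->
    exists m : M, m != 0 /\ in_colon a m.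

(* S^{-1} R = R, with S = R \ Z_R(M): every element of S is a unit of R *)
Definition loc_compl_trivial {R : comPzRingType} (M : lmodType R) : Prop :=
  forall s : R, ~ zdiv M s -> exists t : R, s * t = 1.

Section ProdMod.
Variables (R1 R2 : comPzRingType) (M1 : lmodType R1) (M2 : lmodType R2).
Definition prodmod : Type := (M1 * M2)%type.
HB.instance Definition _ := GRing.Zmodule.on prodmod.
Definition prodmod_scale (r : R1 * R2) (m : prodmod) : prodmod :=
  (r.1 *: m.1, r.2 *: m.2).
Lemma prodmod_scaleA a b (v : prodmod) :
  prodmod_scale a (prodmod_scale b v) = prodmod_scale (a * b) v.
Proof. by case: a b v => [a1 a2] [b1 b2] [v1 v2]; rewrite /prodmod_scale /= !scalerA. Qed.
Lemma prodmod_scale1 (v : prodmod) : prodmod_scale 1 v = v.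
Proof. by case: v => v1 v2; rewrite /prodmod_scale /= !scale1r. Qed.
Lemma prodmod_scaleDr a (u v : prodmod) :
  prodmod_scale a (u + v) = prodmod_scale a u + prodmod_scale a v.
Proof. by case: a u v => [a1 a2] [u1 u2] [v1 v2]; rewrite /prodmod_scale /= !scalerDr. Qed.
Lemma prodmod_scaleDl (v : prodmod) :
  {morph prodmod_scale^~ v : a b / a + b}.
Proof. by case: v => v1 v2 [a1 a2] [b1 b2]; rewrite /prodmod_scale /= !scalerDl. Qed.
HB.instance Definition _ := GRing.Zmodule_isLmodule.Build (R1 * R2)%type prodmod
  prodmod_scaleA prodmod_scale1 prodmod_scaleDr prodmod_scaleDl.
End ProdMod.

From HB Require Import structures.
From mathcomp Require Import all_boot all_order all_algebra.
From Stdlib Require Import Classical.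
Local Open Scope ring_scope.
Import GRing.Theory.

(* For a nonzero module M, proper strong Property A together with S^{-1}R = R
   says exactly that every proper finitely generated ideal I has (0 :_M I) <> 0:
   a generator of I outside Z(M) would be a unit.  Over R1 x R2, ideals, zero
   divisors and annihilators all split componentwise, so this property passes
   from M1 and M2 to M1 x M2.  Conversely, for a proper ideal I of R1, the ideal
   I x R2 is generated by elements of Z(M1 x M2), namely (0, 1) and the (x, 0),
   so Property A for M1 x M2 yields a nonzero element of (0 :_M1 I); the case of
   M2 follows by swapping the factors. *)

Definition proper_colon_neq0 {R : comPzRingType} (M : lmodType R) : Prop :=
  forall a : seq R, ~ in_ideal a 1 -> exists m : M, m != 0 /\ in_colon a m.

Section Ideals.
Variable R : comPzRingType.
Implicit Types (a : seq R) (r x : R).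

Lemma in_ideal_nil r : in_ideal [::] r <-> r = 0.
Proof.
split; first by case=> c [_ ->]; rewrite big_ord0.
by move->; exists [::]; rewrite big_ord0.
Qed.

Lemma in_ideal_cons x a r :
  in_ideal (x :: a) r <-> exists c s, in_ideal a s /\ r = c * x + s.
Proof.
split.
- case=> -[|c0 c] [//= [size_c] ->].
  exists c0, (\sum_(i < size a) c`_i * a`_i); split; first by exists c.
  by rewrite big_ord_recl.
- case=> c [s [[c' [size_c' ->]] ->]]; exists (c :: c').
  by rewrite /= size_c' big_ord_recl.
Qed.

Lemma in_ideal0 a : in_ideal a 0.
Proof.
elim: a => [|x a IH]; first exact/in_ideal_nil.
by apply/in_ideal_cons; exists 0, 0; rewrite mul0r addr0.
Qed.

Lemma in_ideal_mem a x t : x \in a -> in_ideal a (t * x).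
Proof.
elim: a => [|y a IH] //; rewrite inE => /predU1P[->|x_a]; apply/in_ideal_cons.
  by exists t, 0; rewrite addr0; split; first exact: in_ideal0.
by exists 0, (t * x); rewrite mul0r add0r; split; first exact: IH.
Qed.

Lemma in_ideal_cons0 a r : in_ideal (0 :: a) r <-> in_ideal a r.
Proof.
rewrite in_ideal_cons; split => [[c [s [a_s ->]]]|a_r].
  by rewrite mulr0 add0r.
by exists 0, r; rewrite mulr0 add0r.
Qed.

Lemma unit_in_ideal1 x : in_ideal [:: x] 1 -> exists t, x * t = 1.
Proof.
by case/in_ideal_cons=> c [s [/in_ideal_nil -> ->]]; exists c; rewrite addr0 mulrC.
Qed.

End Ideals.

Section ColonNonzero.
Context {R : comPzRingType} {M : lmodType R}.

Lemma zdiv0 : (exists m : M, m != 0) -> zdiv M 0.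
Proof. by case=> m m_neq0; exists m; rewrite scale0r. Qed.

Lemma proper_strong_A_loc_complE :
  (exists m : M, m != 0) ->
  proper_strong_A M /\ loc_compl_trivial M <-> proper_colon_neq0 M.
Proof.
move=> M_neq0; split => [[psA loc] [|x a] a_proper|colon_neq0].
- by case: M_neq0 => m m_neq0; exists m; split=> // r /in_ideal_nil ->; rewrite scale0r.
- apply: psA => // y y_a; apply: NNPP => y_nzdiv.
  have [t y_t] := loc y y_nzdiv.
  by apply: a_proper; rewrite -y_t mulrC; apply: in_ideal_mem.
split=> [a _ _|s s_nzdiv]; first exact: colon_neq0.
have [|s_proper] := classic (in_ideal [:: s] 1); first exact: unit_in_ideal1.
have [m [m_neq0 m_colon]] := colon_neq0 _ s_proper.
case: s_nzdiv; exists m; split => //; rewrite -[s]mul1r.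
by apply: m_colon; apply: in_ideal_mem; rewrite mem_head.
Qed.

End ColonNonzero.

Section Product.
Context {R1 R2 : comPzRingType} {M1 : lmodType R1} {M2 : lmodType R2}.

Lemma pair_eq0 (u : M1) (v : M2) :
  ((u, v) : prodmod M1 M2) = 0 <-> u = 0 /\ v = 0.
Proof. by split=> [[-> ->]|[-> ->]]. Qed.

Lemma pair_neq0 (u : M1) (v : M2) :
  (((u, v) : prodmod M1 M2) != 0) = (u != 0) || (v != 0).
Proof. by rewrite -negb_and; congr negb; apply/eqP/andP => /pair_eq0 [] /eqP. Qed.

Lemma in_ideal_prod (a : seq (R1 * R2)) (r : R1 * R2) :
  in_ideal a r <-> in_ideal (map fst a) r.1 /\ in_ideal (map snd a) r.2.
Proof.
elim: a r => [|x a IH] [r1 r2] /=.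
  by rewrite !in_ideal_nil; split=> [[-> ->]|[-> ->]].
rewrite !in_ideal_cons; split.
  case=> c [[s1 s2] [/IH[/= a_s1 a_s2] [-> ->]]].
  by split; [exists c.1, s1 | exists c.2, s2].
case=> [[c1 [s1 [a_s1 ->]]] [c2 [s2 [a_s2 ->]]]].
by exists (c1, c2), (s1, s2); split; first exact/IH.
Qed.

Lemma zdiv_prod (r : R1 * R2) :
  zdiv (prodmod M1 M2) r <-> zdiv M1 r.1 \/ zdiv M2 r.2.
Proof.
split=> [[[m1 m2] [+ /pair_eq0[r1_m1 r2_m2]]]|[[m1 [m1_neq0 r1_m1]]|[m2 [m2_neq0 r2_m2]]]].
- by rewrite pair_neq0 => /orP[m1_neq0|m2_neq0]; [left; exists m1|right; exists m2].
- exists (m1, 0); rewrite pair_neq0 m1_neq0.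
  by split=> //; apply/pair_eq0; rewrite scaler0.
- exists (0, m2); rewrite pair_neq0 m2_neq0 orbT.
  by split=> //; apply/pair_eq0; rewrite scaler0.
Qed.

Lemma in_colon_prod (a : seq (R1 * R2)) (m1 : M1) (m2 : M2) :
  in_colon a ((m1, m2) : prodmod M1 M2) <->
  in_colon (map fst a) m1 /\ in_colon (map snd a) m2.
Proof.
split=> [a_m|[a1_m1 a2_m2] r /in_ideal_prod[a1_r a2_r]].
  split=> r a_r.
    suff /pair_eq0[] : ((r, 0) : R1 * R2) *: ((m1, m2) : prodmod M1 M2) = 0 by [].
    by apply: a_m; apply/in_ideal_prod; split=> //; apply: in_ideal0.
  suff /pair_eq0[] : ((0, r) : R1 * R2) *: ((m1, m2) : prodmod M1 M2) = 0 by [].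
  by apply: a_m; apply/in_ideal_prod; split=> //; apply: in_ideal0.
by apply/pair_eq0; split; [apply: a1_m1|apply: a2_m2].
Qed.

Lemma proper_colon_neq0_prod :
  proper_colon_neq0 M1 -> proper_colon_neq0 M2 ->
  proper_colon_neq0 (prodmod M1 M2).
Proof.
move=> colon1 colon2 a a_proper.
have [a1_improper|a1_proper] := classic (in_ideal (map fst a) 1).
- have [|m2 [m2_neq0 a2_m2]] := colon2 (map snd a).
    by move=> a2_improper; apply/a_proper/in_ideal_prod.
  exists (0, m2); rewrite pair_neq0 m2_neq0 orbT; split=> //.
  by apply/in_colon_prod; split=> // r _; rewrite scaler0.
- have [m1 [m1_neq0 a1_m1]] := colon1 _ a1_proper.
  exists (m1, 0); rewrite pair_neq0 m1_neq0; split=> //.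
  by apply/in_colon_prod; split=> // r _; rewrite scaler0.
Qed.

Hypotheses (M1_neq0 : exists m : M1, m != 0) (M2_neq0 : exists m : M2, m != 0).

Lemma proper_colon_neq0_fst :
  proper_strong_A (prodmod M1 M2) -> proper_colon_neq0 M1.
Proof.
move=> psA a a_proper.
pose b : seq (R1 * R2) := (0, 1) :: [seq (x, 0) | x <- a].
have b_fst : map fst b = 0 :: a by rewrite /= -map_comp map_id.
have b_snd : map snd b = 1 :: [seq 0 | _ <- a] by rewrite /= -map_comp.
have [|||[m1 m2] [m_neq0 /in_colon_prod[]]] := psA b => //.
- move=> x /predU1P[->|/mapP[y _ ->]]; apply/zdiv_prod.
    by left; apply: zdiv0.
  by right; apply: zdiv0.
- by case/in_ideal_prod; rewrite b_fst => /in_ideal_cons0.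
rewrite b_fst b_snd => b1_m1 b2_m2.
have m2_0 : m2 = 0.
  rewrite -[m2]scale1r; apply: b2_m2; rewrite -[X in in_ideal _ X]mulr1.
  exact/in_ideal_mem/mem_head.
exists m1; split; first by move: m_neq0; rewrite pair_neq0 m2_0 eqxx orbF.
by move=> r /in_ideal_cons0; apply: b1_m1.
Qed.

End Product.

Lemma proper_strong_A_swap {R1 R2 : comPzRingType}
    {M1 : lmodType R1} {M2 : lmodType R2} :
  proper_strong_A (prodmod M1 M2) -> proper_strong_A (prodmod M2 M1).
Proof.
move=> psA a a_nonempty a_zdiv a_proper.
pose swap (x : R2 * R1) : R1 * R2 := (x.2, x.1).
have [|||[m1 m2] [m_neq0 /in_colon_prod[]]] := psA (map swap a).
- by rewrite size_map.
- move=> _ /mapP[x x_a ->]; apply/zdiv_prod.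
  by have /zdiv_prod[] := a_zdiv x x_a; [right|left].
- case/in_ideal_prod; rewrite -!map_comp => snd_unit fst_unit.
  exact/a_proper/in_ideal_prod.
rewrite -!map_comp => a2_m1 a1_m2; exists (m2, m1); split.
  by rewrite pair_neq0 orbC -pair_neq0.
exact/in_colon_prod.
Qed.

Theorem theorem3p10 (R1 R2 : comPzRingType) (M1 : lmodType R1) (M2 : lmodType R2)
  (hM1 : exists m : M1, m != 0) (hM2 : exists m : M2, m != 0) :
  proper_strong_A (prodmod M1 M2) <->
  (proper_strong_A M1 /\ loc_compl_trivial M1) /\
  (proper_strong_A M2 /\ loc_compl_trivial M2).
Proof.
rewrite (proper_strong_A_loc_complE hM1) (proper_strong_A_loc_complE hM2).
split=> [psA|[colon1 colon2] a _ _].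
  split; first exact: proper_colon_neq0_fst psA.
  exact/(proper_colon_neq0_fst hM2 hM1)/proper_strong_A_swap.
exact: proper_colon_neq0_prod.
Qed.
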